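(* Let $N\ge1$, $h,\varepsilon\in(0,1)$, and let $\Phi$ be the opinion operator defined in the context. Let $P=(p_1,\dots,p_N)$ be a nondecreasing fixed point of $\Phi$ of one of the following two forms, with associated indices $a\le m$: (i) $P=(-1,\dots,-1,0,\dots,0,1,\dots,1)$ with at least one zero entry, where $a$ and $m$ are the first and last indices with $p_k=0$; (ii) there are indices $1\le a\le l<b\le m\le N$ with $p_k=-1$ for $k<a$, $-\varepsilon<p_k<0$ for $a\le k\le l$, $p_k=0$ for $l<k<b$, $0<p_k<\varepsilon$ for $b\le k\le m$, $p_k=1$ for $k>m$, $J(p_k)=\{a,\dots,m\}$ for all $k\in\{a,\dots,m\}$, and $p_a+\dots+p_m=0$. Let $\rho(V,V')=\max_{1\le k\le N}|v_k-v'_k|$ and $\Pi=\{V:\ v_a+\dots+v_m=0\}$. Then there exists $d>0$ such that, with $U=\{V:\rho(V,P)<d\}$, for every $V\in U\setminus\Pi$ with nondecreasing components there exists $n>0$ with $\Phi^n(V)\notin U$.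
   Context: For $V=(v_1,\dots,v_N)\in[-1,1]^N$ and each $k$, let $J(v_k)=\{l\in\{1,\dots,N\}:|v_l-v_k|\le\varepsilon\}$ (computed within the array $V$) and $I(v_k)=|J(v_k)|$. Put $w_k(V)=v_k+\frac{h}{I(v_k)}\sum_{l\in J(v_k)}v_l$. Then $\Phi(V)=(v_1',\dots,v_N')$ where $v_k'=-1$ if $w_k<-1$, $v_k'=1$ if $w_k>1$, and $v_k'=w_k$ if $|w_k|\le1$. *)

(* R : realType.  Vectors V = (v_1..v_N) are functions 'I_N -> R
   (0-based indices). *)
From HB Require Import structures.
From mathcomp Require Import all_boot all_order all_algebra.
From mathcomp Require Import reals.
Set Implicit Arguments. Unset Strict Implicit. Unset Printing Implicit Defensive.
Import Order.TTheory GRing.Theory Num.Theory.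
Local Open Scope ring_scope.

Section Opinion.
Variables (R : realType) (N : nat) (h eps : R).

Definition Jset (V : 'I_N -> R) (k : 'I_N) : {set 'I_N} :=
  [set l | `|V l - V k| <= eps].

Definition wk (V : 'I_N -> R) (k : 'I_N) : R :=
  V k + h / (#|Jset V k|%:R) * \sum_(l in Jset V k) V l.

Definition clip (x : R) : R :=
  if x < -1 then -1 else if 1 < x then 1 else x.

Definition Phi (V : 'I_N -> R) : 'I_N -> R := fun k => clip (wk V k).

Definition rho (V V' : 'I_N -> R) : R :=
  \big[Num.max/0]_(k < N) `|V k - V' k|.

Definition nondecr (V : 'I_N -> R) : Prop :=
  forall i j : 'I_N, (i <= j)%N -> V i <= V j.

Definition inPi (a m : 'I_N) (V : 'I_N -> R) : Prop :=
  \sum_(k < N | (a <= k <= m)%N) V k = 0.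

Definition formI (P : 'I_N -> R) (a m : 'I_N) : Prop :=
  (forall k, P k = -1 \/ P k = 0 \/ P k = 1) /\
  P a = 0 /\ P m = 0 /\ (forall k, P k = 0 -> (a <= k <= m)%N).

Definition formII (P : 'I_N -> R) (a m : 'I_N) : Prop :=
  exists l b : 'I_N,
    (a <= l)%N /\ (l < b)%N /\ (b <= m)%N /\
        (forall k : 'I_N, (k < a)%N -> P k = -1) /\
        (forall k : 'I_N, (a <= k <= l)%N -> (- eps < P k) && (P k < 0)) /\
        (forall k : 'I_N, (l < k < b)%N -> P k = 0) /\
        (forall k : 'I_N, (b <= k <= m)%N -> (0 < P k) && (P k < eps)) /\
        (forall k : 'I_N, (m < k)%N -> P k = 1) /\
        (forall k : 'I_N, (a <= k <= m)%N ->
            Jset P k = [set i : 'I_N | (a <= i <= m)%N]) /\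
        inPi a m P.

End Opinion.

From HB Require Import structures.
From mathcomp Require Import all_boot all_order all_algebra.
From mathcomp Require Import reals.
From mathcomp Require Import ring lra.
From Stdlib Require Import Classical.
Set Implicit Arguments. Unset Strict Implicit. Unset Printing Implicit Defensive.
Import Order.TTheory GRing.Theory Num.Theory.
Local Open Scope ring_scope.

(* Let B = {a, ..., m}.  In both forms P is an isolated block: |p_k| < eps on B,
   the p_k sum to 0 over B, and every p_l with l outside B is more than eps away
   from every p_k with k in B.  If the orbit of V stayed d-close to P forever (d
   small), B would stay isolated and unclipped, so on B the operator is
   v_k + h * (mean of v over the eps-neighbourhood of v_k inside B).
   - If at some time the spread of v on B exceeds eps, the neighbourhood of the
     largest value misses the smallest one, so its mean is at least the mean
     of B without the minimum, and symmetrically; hence the spread is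
     multiplied by at least 1 + h / |B| at each step and blows up.
   - Otherwise every neighbourhood is all of B, so the sum over B is multiplied
     by 1 + h at each step; it is nonzero at time 0 because V is not in Pi,
     so it blows up too, although it stays within |B| d of the sum for P, 0. *)

Lemma bernoulli_ineq (R : realDomainType) (c : R) (n : nat) :
  0 <= c -> 1 + n%:R * c <= (1 + c) ^+ n.
Proof.
move=> c_ge0; elim: n => [|n IHn]; first by rewrite mul0r addr0 expr0.
have nc_ge0 : 0 <= n%:R * c by rewrite mulr_ge0.
rewrite exprS -natr1; apply: le_trans (ler_wpM2l _ IHn); nra.
Qed.

Lemma geometric_unbounded (R : archiRealFieldType) (c x K : R) :
  0 < c -> 0 < x -> exists n : nat, K < x * (1 + c) ^+ n.
Proof.
move=> c_gt0 x_gt0; set y := `|K| / (x * c).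
have xc_gt0 : 0 < x * c by rewrite mulr_gt0.
exists (Num.bound y).
have y_lt : y < (Num.bound y)%:R by rewrite archi_boundP // divr_ge0 // ltW.
have yxc : y * (x * c) = `|K| by rewrite mulfVK // gt_eqF.
have := ler_wpM2l (ltW x_gt0) (bernoulli_ineq (Num.bound y) (ltW c_gt0)).
have := ler_norm K; nra.
Qed.

Lemma exists_pos_lower_bound (R : realDomainType) (I : finType) (f : I -> R) :
  (forall i, 0 < f i) -> exists2 g : R, 0 < g & forall i, g <= f i.
Proof.
move=> f_gt0; exists (\big[Num.min/1]_i f i).
  by apply: (big_ind (fun x => 0 < x)) => // x y x_gt0 y_gt0; rewrite lt_min x_gt0.
by move=> i; rewrite (bigD1 i) //= ge_min lexx.
Qed.

Section Mean.
Variables (R : realFieldType) (I : finType).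

Definition mean (A : {set I}) (f : I -> R) : R := (\sum_(i in A) f i) / #|A|%:R.

Lemma meanN (A : {set I}) (f : I -> R) : mean A (fun i => - f i) = - mean A f.
Proof. by rewrite /mean sumrN mulNr. Qed.

Lemma mean_setD1 (A : {set I}) (f : I -> R) (x : I) :
  x \in A -> mean (A :\ x) f = (\sum_(i in A) f i - f x) / #|A :\ x|%:R.
Proof.
move=> xA; rewrite /mean (bigD1 x xA) /= addrC addrK.
by congr (_ / _); apply: eq_bigl => i; rewrite !inE andbC.
Qed.

Lemma mean_le_subset (A T : {set I}) (f : I -> R) :
  T \subset A -> T != set0 ->
  (forall x y, x \in T -> y \in A :\: T -> f y <= f x) -> mean A f <= mean T f.
Proof.
move=> sTA T_n0 f_dom.
have T_gt0 : 0 < #|T|%:R :> R by rewrite ltr0n card_gt0.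
rewrite /mean (big_setID T) /= (setIidPr sTA) -(cardsID T A) (setIidPr sTA).
set sT := \sum_(i in T) f i; set sD := \sum_(i in A :\: T) f i.
rewrite natrD; set a : R := #|T|%:R; set b : R := #|A :\: T|%:R.
have b_ge0 : 0 <= b by rewrite ler0n.
have cross : a * sD <= b * sT.
  rewrite /a /b !mulr_natl -!sumr_const exchange_big /=.
  by apply: ler_sum => y yD; apply: ler_sum => x xT; exact: f_dom.
have ab_gt0 : 0 < a + b by lra.
by rewrite ler_pdivlMr // mulrAC ler_pdivrMr //; nra.
Qed.
End Mean.

Definition separated (R : numDomainType) (I : finType)
    (V : I -> R) (B : {set I}) (s : R) :=
  forall k l, k \in B -> l \notin B -> s < `|V l - V k|.

Lemma separatedN (R : numDomainType) (I : finType) (V : I -> R) B s :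
  separated V B s -> separated (fun i => - V i) B s.
Proof. by move=> V_sep k l kB lB; rewrite -opprD normrN V_sep. Qed.

Lemma separated_gap (R : realFieldType) (I : finType) (V : I -> R) B s :
  separated V B s -> exists2 g, 0 < g & separated V B (s + g).
Proof.
move=> V_sep.
pose gap (p : I * I) : R :=
  if (p.1 \in B) && (p.2 \notin B) then `|V p.2 - V p.1| - s else 1.
have [g g_gt0 g_le] : exists2 g, 0 < g & forall p, g <= gap p.
  apply: exists_pos_lower_bound => -[k l]; rewrite /gap /=.
  by case: ifP => // /andP[kB lB]; rewrite subr_gt0 V_sep.
exists (g / 2) => [|k l kB lB]; first by rewrite divr_gt0.
by have := g_le (k, l); rewrite /gap /= kB lB /=; lra.
Qed.

Lemma separated_near (R : realDomainType) (I : finType) (P V : I -> R) B s d :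
  separated P B (s + 2 * d) -> (forall k, `|V k - P k| < d) -> separated V B s.
Proof.
move=> P_sep V_near k l kB lB.
have := P_sep k l kB lB; have := V_near k; have := V_near l.
have := ler_distD (V l) (P l) (P k); have := ler_distD (V k) (V l) (P k).
rewrite (distrC (P l) (V l)); lra.
Qed.

Lemma JsetN (R : realType) N eps (V : 'I_N -> R) k :
  Jset eps (fun i => - V i) k = Jset eps V k.
Proof. by apply/setP => l; rewrite !inE -opprD normrN. Qed.

Lemma wkE (R : realType) N h eps (V : 'I_N -> R) k :
  wk h eps V k = V k + h * mean (Jset eps V k) V.
Proof. by rewrite /wk /mean mulrAC -mulrA. Qed.

Lemma clip_id (R : realType) (x : R) : `|clip x| < 1 -> clip x = x.
Proof.
rewrite /clip; case: ifP => _; first by rewrite normrN normr1 ltxx.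
by case: ifP => _ //; rewrite normr1 ltxx.
Qed.

Section Neighbourhoods.
Variables (R : realType) (N : nat) (eps : R) (B : {set 'I_N}) (V : 'I_N -> R).
Hypotheses (eps_ge0 : 0 <= eps) (V_sep : separated V B eps).

Lemma Jset_cluster k :
  k \in B -> (forall l, l \in B -> `|V l - V k| <= eps) -> Jset eps V k = B.
Proof.
move=> kB B_close; apply/setP => l; rewrite inE.
case: (boolP (l \in B)) => [/B_close -> // | lB].
by apply/negbTE; rewrite -ltNge V_sep.
Qed.

Lemma mean_Jset_argmax k l :
  k \in B -> l \in B -> (forall i, i \in B -> V i <= V k) -> eps < V k - V l ->
  mean (B :\ l) V <= mean (Jset eps V k) V.
Proof.
move=> kB lB Vk_max spread.
apply: mean_le_subset => [|| x y].
- apply/subsetP => x; rewrite !inE => Jx; apply/andP; split.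
    by apply: contraTneq Jx => ->; rewrite -ltNge ler0_norm; move: eps_ge0; lra.
  by apply: contraLR Jx => xB; rewrite -ltNge V_sep.
- by apply/set0Pn; exists k; rewrite inE subrr normr0.
- rewrite !inE -ltNge => Jx /andP[yJ /andP[_ yB]].
  have Vy_le := Vk_max y yB.
  move: yJ Jx; rewrite ler_norml ler0_norm ?subr_le0 // => yJ /andP[Jx _]; lra.
Qed.

End Neighbourhoods.

Lemma mean_Jset_argmin (R : realType) N eps (B : {set 'I_N}) (V : 'I_N -> R) k l :
  0 <= eps -> separated V B eps -> k \in B -> l \in B ->
  (forall i, i \in B -> V l <= V i) -> eps < V k - V l ->
  mean (Jset eps V l) V <= mean (B :\ k) V.
Proof.
move=> eps_ge0 V_sep kB lB Vl_min spread.
rewrite -lerN2 -!meanN -[Jset eps V l]JsetN.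
apply: (mean_Jset_argmax eps_ge0 (separatedN V_sep) lB kB) => [i iB|].
- by rewrite lerN2 Vl_min.
- by rewrite opprK addrC.
Qed.

Section ClusterStep.
Variables (R : realType) (N : nat) (h eps : R) (B : {set 'I_N}) (V : 'I_N -> R).
Hypotheses (V_sep : separated V B eps)
  (V_unclipped : forall k, k \in B -> Phi h eps V k = wk h eps V k).

Lemma cluster_sum_Phi :
  (forall k l, k \in B -> l \in B -> `|V l - V k| <= eps) ->
  \sum_(k in B) Phi h eps V k = (1 + h) * \sum_(k in B) V k.
Proof.
move=> B_close.
have [/eqP|B_gt0] := posnP #|B|.
  by rewrite cards_eq0 => /eqP ->; rewrite !big_set0 mulr0.
rewrite (eq_bigr (fun k => V k + h * mean B V)) => [|k kB]; last first.
  by rewrite V_unclipped // wkE (Jset_cluster V_sep kB (B_close k^~ kB)).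
rewrite big_split /= sumr_const /mean -mulr_natr.
by field; rewrite pnatr_eq0 -lt0n.
Qed.

Lemma cluster_spread_grows k0 l0 :
  0 < h -> 0 < eps -> k0 \in B -> l0 \in B -> eps < V k0 - V l0 ->
  exists k l, [/\ k \in B, l \in B &
    (1 + h / #|B|%:R) * (V k0 - V l0) <= Phi h eps V k - Phi h eps V l].
Proof.
move=> h_gt0 eps_gt0 k0B l0B spread0.
have [k kB Vk_max] : exists2 k, k \in B & forall i, i \in B -> V i <= V k.
  by have [k] := arg_maxP V k0B; exists k.
have [l lB Vl_min] : exists2 l, l \in B & forall i, i \in B -> V l <= V i.
  by have [l] := arg_minP V l0B; exists l.
exists k, l; split => //.
have spread_le : V k0 - V l0 <= V k - V l.
  by have := Vk_max _ k0B; have := Vl_min _ l0B; lra.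
have spread : eps < V k - V l by lra.
have mean_k := mean_Jset_argmax (ltW eps_gt0) V_sep kB lB Vk_max spread.
have mean_l := mean_Jset_argmin (ltW eps_gt0) V_sep kB lB Vl_min spread.
have kl : k != l by apply: contraTneq spread => ->; rewrite subrr -leNgt ltW.
have cardB : #|B| = #|B :\ k|.+1 by rewrite (cardsD1 k B) kB.
have cardBl : #|B :\ l| = #|B :\ k| by apply: succn_inj; rewrite -cardB (cardsD1 l B) lB.
move: mean_k mean_l; rewrite !mean_setD1 // cardBl cardB -natr1.
set c : R := #|B :\ k|%:R; set S := \sum_(i in B) V i => mean_k mean_l.
have c_ge1 : 1 <= c.
  by rewrite ler1n card_gt0; apply/set0Pn; exists l; rewrite !inE eq_sym kl.
rewrite !V_unclipped // !wkE.
have := ler_wpM2l (ltW h_gt0) mean_k; have := ler_wpM2l (ltW h_gt0) mean_l.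
have -> : h * ((S - V l) / c) = h * ((S - V k) / c) + h / c * (V k - V l).
  by field; rewrite gt_eqF // (lt_le_trans ltr01).
have rate_le : h / (c + 1) <= h / c by rewrite ler_pM2l // lef_pV2 ?posrE; lra.
have rate_ge0 : 0 <= h / (c + 1) by rewrite divr_ge0 //; lra.
have : 0 <= (h / c - h / (c + 1)) * (V k0 - V l0).
  by rewrite mulr_ge0 ?subr_ge0 //; lra.
nra.
Qed.

End ClusterStep.

Lemma dist_le_rho (R : realType) N (W P : 'I_N -> R) k : `|W k - P k| <= rho W P.
Proof. by rewrite /rho (bigD1 k) //= le_max lexx. Qed.

Section Trajectory.
Variables (R : realType) (N : nat) (h eps d : R) (B : {set 'I_N}) (P V : 'I_N -> R).
Hypotheses (h_gt0 : 0 < h) (eps_gt0 : 0 < eps) (d_le : d <= 1 - eps).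
Hypotheses (P_small : forall k, k \in B -> `|P k| < eps)
  (P_sum : \sum_(k in B) P k = 0) (P_sep : separated P B (eps + 2 * d))
  (V_close : forall n k, `|iter n (Phi h eps) V k - P k| < d).

Local Notation Vn n := (iter n (Phi h eps) V).

Lemma trajectory_lt1 n k : k \in B -> `|Vn n k| < 1.
Proof.
move=> kB; have := ler_normD (Vn n k - P k) (P k); rewrite subrK.
by have := P_small kB; have := V_close n k; move: d_le; lra.
Qed.

Lemma trajectory_unclipped n k : k \in B -> Phi h eps (Vn n) k = wk h eps (Vn n) k.
Proof. by move=> kB; apply: clip_id; exact: (trajectory_lt1 n.+1 kB). Qed.

Lemma trajectory_separated n : separated (Vn n) B eps.
Proof. exact: separated_near P_sep (V_close n). Qed.

Lemma trajectory_spread_geometric n k0 l0 :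
  k0 \in B -> l0 \in B -> eps < Vn n k0 - Vn n l0 ->
  forall j, exists k l, [/\ k \in B, l \in B &
    (Vn n k0 - Vn n l0) * (1 + h / #|B|%:R) ^+ j <= Vn (j + n) k - Vn (j + n) l].
Proof.
move=> k0B l0B spread0; elim=> [|j [k [l [kB lB spread_j]]]].
  by exists k0, l0; rewrite expr0 mulr1.
have rate_ge0 : 0 <= h / #|B|%:R by rewrite divr_ge0 ?ler0n // ltW.
have growth_ge1 : 1 <= (1 + h / #|B|%:R) ^+ j by rewrite exprn_ege1 // lerDl.
have spread : eps < Vn (j + n) k - Vn (j + n) l.
  apply: lt_le_trans spread_j; apply: (lt_le_trans spread0).
  by rewrite ler_peMr // ltW // (lt_trans eps_gt0 spread0).
have [k' [l' [k'B l'B step]]] := cluster_spread_grows (trajectory_separated _)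
  (trajectory_unclipped _) h_gt0 eps_gt0 kB lB spread.
exists k', l'; split => //; apply: le_trans step.
by rewrite exprS mulrCA ler_wpM2l // addr_ge0.
Qed.

Lemma trajectory_spread_le n k l : k \in B -> l \in B -> Vn n k - Vn n l <= eps.
Proof.
move=> kB lB; rewrite leNgt; apply/negP => spread.
have rate_gt0 : 0 < h / #|B|%:R.
  by rewrite divr_gt0 // ltr0n card_gt0; apply/set0Pn; exists k.
have [j too_big] := geometric_unbounded 2 rate_gt0 (lt_trans eps_gt0 spread).
have [k' [l' [k'B l'B spread_j]]] := trajectory_spread_geometric kB lB spread j.
have := trajectory_lt1 (j + n) k'B; have := trajectory_lt1 (j + n) l'B.
by rewrite !ltr_norml => /andP[? ?] /andP[? ?]; lra.
Qed.

Lemma trajectory_block_sum n : \sum_(k in B) Vn n k = (1 + h) ^+ n * \sum_(k in B) V k.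
Proof.
elim: n => [|n IHn]; first by rewrite expr0 mul1r.
rewrite exprS -mulrA -IHn; apply: cluster_sum_Phi => [|k|k l kB lB].
- exact: trajectory_separated.
- exact: trajectory_unclipped.
- by rewrite ler_norml lerNl opprB !trajectory_spread_le.
Qed.

Lemma trajectory_block_sum_eq0 : \sum_(k in B) V k = 0.
Proof.
apply/eqP; apply: contraT => S_neq0.
have bounded n : `|\sum_(k in B) Vn n k| <= #|B|%:R * d.
  have -> : \sum_(k in B) Vn n k = \sum_(k in B) (Vn n k - P k).
    by rewrite sumrB P_sum subr0.
  rewrite mulr_natl -sumr_const.
  by apply: le_trans (ler_norm_sum _ _ _) _; apply: ler_sum => k _; exact/ltW.
have S_gt0 : 0 < `|\sum_(k in B) V k| by rewrite normr_gt0.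
have [n too_big] := geometric_unbounded (#|B|%:R * d) h_gt0 S_gt0.
have := bounded n; rewrite trajectory_block_sum normrM ger0_norm; first lra.
by rewrite exprn_ge0 // addr_ge0 // ltW.
Qed.

End Trajectory.

Section Blocks.
Variables (R : realType) (N : nat) (eps : R) (P : 'I_N -> R) (a m : 'I_N).

Definition block : {set 'I_N} := [set k : 'I_N | (a <= k <= m)%N].

Lemma sum_block (V : 'I_N -> R) :
  \sum_(k in block) V k = \sum_(k < N | (a <= k <= m)%N) V k.
Proof. by apply: eq_bigl => k; rewrite inE. Qed.

Definition isolated_block :=
  [/\ forall k, k \in block -> `|P k| < eps, \sum_(k in block) P k = 0
    & separated P block eps].

Lemma formI_isolated : 0 < eps < 1 -> nondecr P -> formI P a m -> isolated_block.
Proof.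
move=> /andP[eps_gt0 eps_lt1] P_nd [P_vals [Pa [Pm P0_block]]].
have P0 k : k \in block -> P k = 0.
  rewrite inE => /andP[ak km].
  by have := P_nd _ _ ak; have := P_nd _ _ km; rewrite Pa Pm; lra.
split=> [k /P0 ->|| k l /P0 -> lB]; first by rewrite normr0.
- by rewrite big1.
have : P l != 0 by apply: contraNneq lB => /P0_block; rewrite inE.
by rewrite subr0; case: (P_vals l) => [->|[->|->]]; rewrite ?eqxx ?normrN ?normr1.
Qed.

Lemma formII_isolated : formII eps P a m -> isolated_block.
Proof.
move=> [l [b [al [_ [_ [_ [P_neg [P_zero [P_pos [_ [P_J P_Pi]]]]]]]]]]].
have eps_gt0 : 0 < eps by have := P_neg a; rewrite leqnn al => /(_ isT) /andP[]; lra.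
split=> [k|| k j kB].
- rewrite inE => /andP[ak km]; case: (leqP k l) => [kl|lk].
    by have := P_neg k; rewrite ak kl => /(_ isT) /andP[? ?]; rewrite ltr0_norm //; lra.
  case: (ltnP k b) => [kb|bk]; first by rewrite P_zero ?lk // normr0.
  by have := P_pos k; rewrite bk km => /(_ isT) /andP[? ?]; rewrite gtr0_norm.
- by rewrite sum_block.
- move: kB; rewrite inE => /P_J /setP /(_ j); rewrite !inE => J_j.
  by rewrite ltNge J_j.
Qed.

End Blocks.

Theorem theorem3 (R : realType) (N : nat) (h eps : R) (P : 'I_N -> R) (a m : 'I_N) :
  (1 <= N)%N -> 0 < h < 1 -> 0 < eps < 1 ->
  (forall k, Phi h eps P k = P k) ->
  nondecr P ->
  (formI P a m \/ formII eps P a m) ->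
  exists2 d : R, 0 < d &
    forall V : 'I_N -> R,
      (forall k, -1 <= V k <= 1) ->
      nondecr V ->
      rho V P < d ->
      ~ inPi a m V ->
      exists n : nat, (0 < n)%N /\ d <= rho (iter n (Phi h eps) V) P.
Proof.
move=> _ /andP[h_gt0 _] eps_bounds _ P_nd P_form.
have /andP[eps_gt0 eps_lt1] := eps_bounds.
have [P_small P_sum P_sep] : isolated_block eps P a m.
  by case: P_form => [/(formI_isolated eps_bounds P_nd)|/formII_isolated].
have [g g_gt0 P_gap] := separated_gap P_sep.
set d := Num.min (g / 2) (1 - eps).
have d_le : d <= 1 - eps by rewrite ge_min lexx orbT.
have P_sep_d : separated P (block a m) (eps + 2 * d).
  move=> k l kB lB; have := P_gap k l kB lB.
  have : d <= g / 2 by rewrite ge_min lexx.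
  lra.
exists d => [|V _ _ V_near V_notPi]; first by rewrite lt_min divr_gt0 //= subr_gt0.
apply: NNPP => V_stays.
have V_close n k : `|iter n (Phi h eps) V k - P k| < d.
  apply: le_lt_trans (dist_le_rho _ _ k) _; case: n => // n.
  by rewrite ltNge; apply/negP => far; apply: V_stays; exists n.+1.
apply: V_notPi; rewrite /inPi -sum_block.
exact: (trajectory_block_sum_eq0 h_gt0 eps_gt0 d_le P_small P_sum P_sep_d V_close).
Qed.
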